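(* Let $T$ be a set of even size $t$ and let $\mathcal{B}\subset T^{(t/2)}$. Then for any $\alpha\in[4/t,1]$ there exists $\mathcal{E}\subset\mathcal{B}$ with $|\mathcal{E}|>|\mathcal{B}|-\alpha\binom{t}{t/2}$ such that every $E\in\mathcal{E}$ has at least $\alpha t^2/2^5$ neighbours in $\mathcal{E}$.
   Context: For a set $T$, $T^{(k)}$ denotes the set of $k$-element subsets of $T$. Two sets $A_1,A_2\in T^{(t/2)}$ are neighbours if $|A_1\triangle A_2|=2$. *)

From mathcomp Require Import all_boot all_order all_algebra.
Set Implicit Arguments. Unset Strict Implicit. Unset Printing Implicit Defensive.
Import Order.TTheory GRing.Theory Num.Theory.

Definition symdiff (T : finType) (A B : {set T}) : {set T} := (A :\: B) :|: (B :\: A).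

Definition neighbours (T : finType) (A1 A2 : {set T}) : bool := #|symdiff A1 A2| == 2.

Definition nbrs_in (T : finType) (E : {set {set T}}) (X : {set T}) : {set {set T}} :=
  [set Y in E | neighbours X Y].

(* Take E inside B maximizing the potential  2 e(E) - 2 d |E|,  with
   d = alpha t^2 / 32.  Maximality against deleting one set gives minimum degree
   at least d in E; maximality against E = B shows that the discarded family
   D = B \ E spans at most d |D| edges.  A family D of h-sets with few edges is
   small: double counting its (h-1)-subsets S, and Cauchy-Schwarz on the number
   of members of D above S, gives (|D| h)^2 <= C(t, h-1) (|D| h + 2 e(D)),
   because two distinct h-sets share an (h-1)-subset iff they are neighbours.
   With h = t/2, d = alpha h^2 / 8 and alpha h >= 2 this forces
   |D| <= 3/4 alpha C(t, h-1) < alpha C(t, h). *)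

From mathcomp Require Import all_boot all_order all_algebra.
From mathcomp Require Import zify ring lra.
Import Order.TTheory GRing.Theory Num.Theory.

Set Implicit Arguments.
Unset Strict Implicit.
Unset Printing Implicit Defensive.

Lemma sum_nat_pred_card (I : finType) (A : {pred I}) (q : pred I) :
  (\sum_(i in A) q i)%N = #|[set i in A | q i]|.
Proof.
rewrite -sum1_card big_mkcond [RHS]big_mkcond /=.
by apply: eq_bigr => i _; rewrite inE; case: (i \in A); case: (q i).
Qed.

Lemma leq_binS n m : (m.+1 <= n - m)%N -> ('C(n, m) <= 'C(n, m.+1))%N.
Proof.
move=> lt_m; rewrite -(@leq_pmul2l m.+1) // mul_bin_left.
exact: leq_mul.
Qed.

Local Open Scope ring_scope.

Lemma sqr_sum_le_card_sum_sqr (R : realDomainType) (I : finType) (A : {pred I})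
    (F : I -> R) :
  (\sum_(i in A) F i) ^+ 2 <= #|A|%:R * \sum_(i in A) F i ^+ 2.
Proof.
set S := \sum_(i in A) F i; set S2 := \sum_(i in A) F i ^+ 2.
have expand_sqr i : \sum_(j in A) (F i - F j) ^+ 2
    = #|A|%:R * F i ^+ 2 - 2 * S * F i + S2.
  rewrite (eq_bigr (fun j => F i ^+ 2 - 2 * F i * F j + F j ^+ 2)); last first.
    by move=> j _; ring.
  by rewrite !big_split /= sumr_const sumrN -mulr_sumr -/S -/S2 -mulr_natl; ring.
have : 0 <= \sum_(i in A) \sum_(j in A) (F i - F j) ^+ 2.
  by do 2!(apply: sumr_ge0 => ? _); apply: sqr_ge0.
rewrite (eq_bigr _ (fun i _ => expand_sqr i)) !big_split /= sumr_const.
rewrite sumrN -!mulr_sumr -/S -/S2 -mulr_natl.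
nra.
Qed.

Local Close Scope ring_scope.

Section NeighbourGraph.

Variable T : finType.
Implicit Types (X Y : {set T}) (E F : {set {set T}}).

Lemma neighboursC X Y : neighbours X Y = neighbours Y X.
Proof. by rewrite /neighbours /symdiff setUC. Qed.

Lemma neighboursxx X : neighbours X X = false.
Proof. by rewrite /neighbours /symdiff setDv setU0 cards0. Qed.

Definition deg E X := \sum_(Y in E) neighbours X Y.

(* Twice the number of edges of the neighbour graph on E. *)
Definition deg_sum E := \sum_(X in E) deg E X.

Lemma card_nbrs_in E X : #|nbrs_in E X| = deg E X.
Proof. by rewrite /deg sum_nat_pred_card. Qed.

Lemma deg_setD1 E X Y : X \in E -> deg E Y = neighbours Y X + deg (E :\ X) Y.
Proof. by move=> XE; rewrite /deg (big_setD1 X XE). Qed.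

Lemma deg_sum_setD1 E X : X \in E -> deg_sum E = (deg E X).*2 + deg_sum (E :\ X).
Proof.
move=> XE; rewrite /deg_sum (big_setD1 X XE) /=.
rewrite (eq_bigr (fun Y => neighbours X Y + deg (E :\ X) Y)); last first.
  by move=> Y _; rewrite (deg_setD1 _ XE) neighboursC.
rewrite big_split /= -addnn addnA; congr (_ + _ + _).
by rewrite [RHS](deg_setD1 _ XE) neighboursxx.
Qed.

Lemma deg_subset E F Y : E \subset F -> deg E Y <= deg F Y.
Proof.
by move=> sEF; rewrite [deg F Y](big_setID E) /= (setIidPr sEF) leq_addr.
Qed.

Lemma deg_sum_setD_add E F : E \subset F -> deg_sum (F :\: E) + deg_sum E <= deg_sum F.
Proof.
move=> sEF; rewrite [deg_sum F](big_setID E) /= (setIidPr sEF) addnC.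
by apply: leq_add; apply: leq_sum => Y _; apply: deg_subset; rewrite ?subsetDl.
Qed.

Lemma sum_subsets_card X k :
  \sum_(S : {set T} | #|S| == k) (S \subset X) = 'C(#|X|, k).
Proof.
by rewrite sum_nat_pred_card -cards_draws; apply: eq_card => S; rewrite !inE andbC.
Qed.

(* The left-hand side counts the common (h-1)-subsets of X and Y. *)
Lemma bin_card_setI_le h X Y : 0 < h -> #|X| = h -> #|Y| = h ->
  'C(#|X :&: Y|, h.-1) <= (X == Y) * h + neighbours X Y.
Proof.
move=> h_gt0 cardX cardY.
have [<-|neqXY] := eqVneq X Y.
  rewrite setIid cardX neighboursxx mul1n addn0.
  by case: h h_gt0 {cardX cardY} => // h _ /=; rewrite binSn.
rewrite mul0n add0n.
have le_XY_h : #|X :&: Y| <= h by rewrite -cardX subset_leq_card ?subsetIl.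
have ne_XY_h : #|X :&: Y| != h.
  apply: contra_neq neqXY => eqh.
  have /eqP <- : X :&: Y == X by rewrite eqEcard subsetIl cardX eqh leqnn.
  by apply/eqP; rewrite eqEcard subsetIr cardY eqh leqnn.
have [lt_h1|gt_h1|eq_h1] := ltngtP #|X :&: Y| h.-1.
- by rewrite bin_small.
- by move: gt_h1 ne_XY_h le_XY_h; lia.
rewrite eq_h1 binn /neighbours /symdiff cardsU !cardsD.
have -> : (X :\: Y) :&: (Y :\: X) = set0.
  by apply/setP => z; rewrite !inE; case: (z \in X); case: (z \in Y).
by rewrite cards0 subn0 [Y :&: X]setIC eq_h1 cardX cardY; apply/eqP; lia.
Qed.

Section ShadowCount.

Variables (h : nat) (D : {set {set T}}).
Hypothesis h_gt0 : 0 < h.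
Hypothesis cardD : forall X, X \in D -> #|X| = h.

Definition shadow_deg (S : {set T}) := \sum_(X in D) (S \subset X).

Lemma sum_shadow_deg : \sum_(S : {set T} | #|S| == h.-1) shadow_deg S = #|D| * h.
Proof.
rewrite exchange_big /= -sum_nat_const; apply: eq_bigr => X XD.
by rewrite sum_subsets_card cardD //; case: h h_gt0 => // h' _; rewrite binSn.
Qed.

Lemma sum_shadow_deg_sqr :
  \sum_(S : {set T} | #|S| == h.-1) shadow_deg S ^ 2 <= #|D| * h + deg_sum D.
Proof.
have sqr_shadow S : shadow_deg S ^ 2
    = \sum_(X in D) \sum_(Y in D) (S \subset X :&: Y).
  rewrite -mulnn big_distrl; apply: eq_bigr => X _.
  rewrite big_distrr; apply: eq_bigr => Y _; rewrite subsetI.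
  by case: (S \subset X); case: (S \subset Y).
rewrite (eq_bigr _ (fun S _ => sqr_shadow S)) exchange_big /=.
under eq_bigr => X _ do rewrite exchange_big /=.
apply: leq_trans (_ : \sum_(X in D) \sum_(Y in D)
                        ((X == Y) * h + neighbours X Y) <= _).
  apply: leq_sum => X XD; apply: leq_sum => Y YD.
  by rewrite sum_subsets_card bin_card_setI_le ?cardD.
rewrite -sum_nat_const -big_split /=; apply/eq_leq/eq_bigr => X XD.
rewrite big_split /= (big_setD1 X XD) eqxx mul1n big1 => [|Y /setD1P[nYX _]].
  by rewrite Monoid.mulm1.
by rewrite eq_sym (negPf nYX).
Qed.

Lemma sqr_card_uniform_le :
  (#|D| * h) ^ 2 <= 'C(#|T|, h.-1) * (#|D| * h + deg_sum D).
Proof.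
pose Sh := [set S : {set T} | #|S| == h.-1].
have sum_Sh (F : {set T} -> nat) :
    \sum_(S in Sh) F S = \sum_(S : {set T} | #|S| == h.-1) F S.
  by apply: eq_bigl => S; rewrite inE.
rewrite -(ler_nat rat) natrM.
have := sqr_sum_le_card_sum_sqr Sh (fun S => (shadow_deg S)%:R : rat).
rewrite -natr_sum sum_Sh sum_shadow_deg card_draws natrX => /le_trans; apply.
rewrite ler_wpM2l // -(eq_bigr _ (fun S _ => natrX rat _ 2)) -natr_sum ler_nat.
by rewrite sum_Sh sum_shadow_deg_sqr.
Qed.

End ShadowCount.

Local Open Scope ring_scope.

Lemma exists_min_deg_subfamily (R : realFieldType) (B : {set {set T}}) (d : R) :
  exists E, [/\ E \subset B,
                forall X, X \in E -> d <= (deg E X)%:R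
              & (deg_sum (B :\: E))%:R <= 2 * d * #|B :\: E|%:R].
Proof.
pose pot E : R := (deg_sum E)%:R - 2 * d * #|E|%:R.
have [E sEB E_max] := @arg_maxP _ R _ B (fun E => E \subset B) pot (subxx B).
exists E; split=> // [X XE|].
  have /= := E_max _ (subset_trans (subsetDl E [set X]) sEB).
  by rewrite /pot (deg_sum_setD1 XE) (cardsD1 X E) XE add1n -natr1 -addnn !natrD; lra.
have /= := E_max _ (subxx B); rewrite /pot.
have := deg_sum_setD_add sEB; rewrite -(ler_nat R) natrD.
by rewrite -(cardsID E B) (setIidPr sEB) setDE natrD; lra.
Qed.

Lemma card_sparse_uniform_lt (R : realFieldType) (h : nat) (D : {set {set T}})
    (a : R) :
  (0 < h)%N -> (forall X, X \in D -> #|X| = h) -> (h.*2 <= #|T|)%N ->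
  2 <= a * h%:R -> (deg_sum D)%:R <= a * h%:R ^+ 2 / 4 * #|D|%:R ->
  #|D|%:R < a * 'C(#|T|, h)%:R.
Proof.
move=> h_gt0 cardD le_2h_T ah_ge2 sparseD.
have le_NC : ('C(#|T|, h.-1) <= 'C(#|T|, h))%N.
  rewrite -{2}(prednK h_gt0) leq_binS // prednK //.
  by move: le_2h_T; rewrite -addnn; lia.
have C_ge1 : (1 <= 'C(#|T|, h))%N.
  by rewrite bin_gt0; move: le_2h_T; rewrite -addnn; lia.
have := sqr_card_uniform_le h_gt0 cardD.
move: le_NC C_ge1 h_gt0 sparseD ah_ge2.
rewrite -!(ler_nat R) natrX !natrM natrD.
set n := #|D|%:R; set hr := h%:R; set N := 'C(_, h.-1)%:R; set C := 'C(_, h)%:R.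
move=> le_NC C_ge1 hr_ge1 sparseD ah_ge2 count.
have n_ge0 : 0 <= n by rewrite ler0n.
have N_ge0 : 0 <= N by rewrite ler0n.
have a_gt0 : 0 < a by nra.
have [->|n_neq0] := eqVneq n 0; first by nra.
have n_gt0 : 0 < n by rewrite lt0r n_neq0 n_ge0.
have : n * (n * hr ^+ 2) <= n * (N * (hr + a * hr ^+ 2 / 4)).
  by have := ler_wpM2l N_ge0 sparseD; nra.
rewrite ler_pM2l // => le_nh2.
(* a h >= 2 makes the linear term h at most half the quadratic one. *)
have hr_le : hr + a * hr ^+ 2 / 4 <= 3 / 4 * (a * hr ^+ 2) by nra.
have : N * (hr + a * hr ^+ 2 / 4) <= C * (3 / 4 * (a * hr ^+ 2)).
  by apply: (le_trans (ler_wpM2l N_ge0 hr_le)); apply: ler_wpM2r; nra.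
nra.
Qed.

End NeighbourGraph.

Local Open Scope ring_scope.

Theorem lemma1 (R : realFieldType) (T : finType) (t : nat)
  (ht : #|T| = t) (ht_even : ~~ odd t) (ht_pos : (0 < t)%N)
  (B : {set {set T}}) (hB : forall A, A \in B -> #|A| = t./2)
  (alpha : R) (ha1 : 4 / t%:R <= alpha) (ha2 : alpha <= 1) :
  exists E : {set {set T}},
    [/\ E \subset B,
        #|B|%:R - alpha * ('C(t, t./2))%:R < (#|E|%:R : R)
      & forall X, X \in E ->
          alpha * (t ^ 2)%:R / (2 ^ 5)%:R <= (#|nbrs_in E X|%:R : R)].
Proof.
set h := t./2.
have t_double : t = h.*2 by rewrite -[LHS]odd_double_half (negPf ht_even).
have h_gt0 : (0 < h)%N by move: ht_pos; rewrite t_double double_gt0.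
have tR : t%:R = 2 * h%:R :> R by rewrite t_double -mul2n natrM.
set d := alpha * (t ^ 2)%:R / (2 ^ 5)%:R.
have d_double : 2 * d = alpha * h%:R ^+ 2 / 4 by rewrite /d !natrX tR; field.
have [E [sEB E_deg D_sparse]] := exists_min_deg_subfamily B d.
exists E; split=> // [|X XE]; last by rewrite card_nbrs_in; apply: E_deg.
have cardD X : X \in B :\: E -> #|X| = h by case/setDP => /hB.
have ah_ge2 : 2 <= alpha * h%:R.
  have t_gt0 : 0 < t%:R :> R by rewrite ltr0n.
  by move: ha1; rewrite ler_pdivrMr // tR; nra.
have D_small : #|B :\: E|%:R < alpha * 'C(t, h)%:R.
  rewrite -ht; apply: card_sparse_uniform_lt cardD _ ah_ge2 _ => //.
    by rewrite ht t_double.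
  by rewrite -d_double.
by rewrite -(cardsID E B) (setIidPr sEB) natrD; lra.
Qed.
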